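(* Let $\Gamma:[0,1]\to\mathcal{D}$ be a continuous path, $\Gamma_t=\Gamma(t)$. For every $s\in[0,1]$ and $\psi\in\Gamma_s$ there is an interval $I\subseteq[0,1]$, open in the topology of $[0,1]$ and containing $s$, which is the domain of a $\Gamma$-path through $\psi$ based at $s$. Moreover, if $j:I\to\mathrm{PSL}_2\mathbb{C}$ is any $\Gamma$-path through $\psi$ based at $s$, then $j$ is the unique $\Gamma$-path through $\psi$ based at $s$ with domain $I$.
   Context: $\mathcal{D}$ is the set of discrete torsion-free subgroups of $\mathrm{PSL}_2\mathbb{C}$ with the Chabauty topology: $\Gamma_n\to\Gamma$ iff every accumulation point of a sequence $\psi_n\in\Gamma_n$ lies in $\Gamma$ and every element of $\Gamma$ is a limit of some sequence $\psi_n\in\Gamma_n$. For a path $\Gamma:[0,1]\to\mathcal{D}$, $s\in[0,1]$ and $\psi\in\Gamma_s$, a $\Gamma$-path through $\psi$ based at $s$ is a continuous map $j:I\to\mathrm{PSL}_2\mathbb{C}$ such that $I\subseteq[0,1]$ is an interval containing $s$, $j(t)\in\Gamma_t$ for all $t\in I$, and $j(s)=\psi$. *)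

From Stdlib Require Import Reals.
From Coquelicot Require Import Coquelicot.
Open Scope R_scope.

Record M2 := mkM2 { ma : C; mb : C; mc : C; md : C }.

Definition mdet (A : M2) : C := (ma A * md A - mb A * mc A)%C.
Definition mmul (A B : M2) : M2 :=
  mkM2 (ma A * ma B + mb A * mc B)%C (ma A * mb B + mb A * md B)%C
       (mc A * ma B + md A * mc B)%C (mc A * mb B + md A * md B)%C.
Definition mid : M2 := mkM2 1%C 0%C 0%C 1%C.
Definition mneg (A : M2) : M2 := mkM2 (- ma A)%C (- mb A)%C (- mc A)%C (- md A)%C.
(* inverse of a determinant-one matrix (the adjugate) *)
Definition minv (A : M2) : M2 := mkM2 (md A) (- mb A)%C (- mc A)%C (ma A).
Fixpoint mpow (A : M2) (n : nat) : M2 :=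
  match n with O => mid | S k => mmul A (mpow A k) end.

Definition SL2 (A : M2) : Prop := mdet A = 1%C.

(** PSL_2(C) = SL_2(C)/{±I}: an element is represented by a matrix of SL_2(C),
    two representatives denote the same element iff they agree up to sign. *)
Definition peq (A B : M2) : Prop := A = B \/ A = mneg B.

Definition mdist (A B : M2) : R :=
  sqrt (Cmod (ma A - ma B)%C ^ 2 + Cmod (mb A - mb B)%C ^ 2
        + Cmod (mc A - mc B)%C ^ 2 + Cmod (md A - md B)%C ^ 2).
Definition pdist (A B : M2) : R := Rmin (mdist A B) (mdist A (mneg B)).

(** A subgroup of PSL_2(C), represented by its (full) preimage in SL_2(C),
    i.e. a subgroup of SL_2(C) containing -I. *)
Definition is_subgroup (G : M2 -> Prop) : Prop :=
  (forall A, G A -> SL2 A) /\ G mid /\ G (mneg mid) /\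
  (forall A B, G A -> G B -> G (mmul A B)) /\
  (forall A, G A -> G (minv A)).

Definition is_discrete (G : M2 -> Prop) : Prop :=
  forall A, G A -> exists eps, eps > 0 /\
    forall B, G B -> pdist A B < eps -> peq A B.

Definition is_torsion_free (G : M2 -> Prop) : Prop :=
  forall A n, G A -> (n >= 1)%nat -> peq (mpow A n) mid -> peq A mid.

Definition Dspace : Type :=
  { G : M2 -> Prop | is_subgroup G /\ is_discrete G /\ is_torsion_free G }.
Definition mem (G : Dspace) (A : M2) : Prop := proj1_sig G A.

Definition accum_point (psi : nat -> M2) (A : M2) : Prop :=
  SL2 A /\ forall eps N, eps > 0 -> exists n, (n >= N)%nat /\ pdist (psi n) A < eps.

Definition chabauty_cv (Gs : nat -> Dspace) (G : Dspace) : Prop :=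
  (forall psi : nat -> M2, (forall n, mem (Gs n) (psi n)) ->
     forall A, accum_point psi A -> mem G A) /\
  (forall A, mem G A -> exists psi : nat -> M2,
     (forall n, mem (Gs n) (psi n)) /\
     forall eps, eps > 0 -> exists N, forall n, (n >= N)%nat -> pdist (psi n) A < eps).

Definition in01 (t : R) : Prop := 0 <= t <= 1.

(** continuity of a path [0,1] -> D (the Chabauty topology on D is metrizable,
    so continuity is sequential continuity) *)
Definition chabauty_path (Gam : R -> Dspace) : Prop :=
  forall (t : R) (u : nat -> R), in01 t -> (forall n, in01 (u n)) ->
    Un_cv u t -> chabauty_cv (fun n => Gam (u n)) (Gam t).

Definition is_interval (I : R -> Prop) : Prop :=
  forall x y z, I x -> I z -> x <= y <= z -> I y.
Definition sub01 (I : R -> Prop) : Prop := forall t, I t -> in01 t.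
Definition open_in01 (I : R -> Prop) : Prop :=
  forall t, I t -> exists eps, eps > 0 /\
    forall u, in01 u -> Rabs (u - t) < eps -> I u.

Definition Gamma_path (Gam : R -> Dspace) (s : R) (psi : M2) (I : R -> Prop)
    (j : R -> M2) : Prop :=
  is_interval I /\ sub01 I /\ I s /\
  (forall t, I t -> forall eps, eps > 0 -> exists delta, delta > 0 /\
      forall u, I u -> Rabs (u - t) < delta -> pdist (j u) (j t) < eps) /\
  (forall t, I t -> mem (Gam t) (j t)) /\
  peq (j s) psi.

From Stdlib Require Import Reals Lra Lia ClassicalEpsilon Classical.
From Coquelicot Require Import Coquelicot.
Open Scope R_scope.

(* Near any time t the groups Gam u are uniformly discrete. Otherwise some Gam (u_n), with
   u_n -> t, contain nontrivial elements ever closer to the identity; being torsion-free and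
   discrete, these have powers at distance between eta/2 and eta from the identity, and a limit
   point of those powers lies in Gam t by Chabauty convergence, contradicting the discreteness of
   Gam t at the identity.
   Uniform discreteness makes an element of Gam u close to a given matrix unique up to sign.
   Chabauty convergence supplies such an element near psi for every u close to s, and this
   selection is continuous. Two Gamma-paths with the same domain agree on a set containing s that
   is open (local uniqueness) and closed (continuity), hence on the whole interval. *)

(** * The Frobenius norm *)

Definition norm4 (p q r s : R) : R := sqrt (p ^ 2 + q ^ 2 + r ^ 2 + s ^ 2).

Lemma sqrt_le_of_le_pow2 x y : 0 <= y -> x <= y ^ 2 -> sqrt x <= y.
Proof. intros Hy Hx. rewrite <- (sqrt_pow2 y Hy). now apply sqrt_le_1_alt. Qed.

Lemma norm4_nonneg p q r s : 0 <= norm4 p q r s.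
Proof. apply sqrt_pos. Qed.

Lemma norm4_pow2 p q r s : norm4 p q r s ^ 2 = p ^ 2 + q ^ 2 + r ^ 2 + s ^ 2.
Proof. unfold norm4. rewrite pow2_sqrt; nra. Qed.

Lemma norm4_le p q r s p' q' r' s' :
  0 <= p <= p' -> 0 <= q <= q' -> 0 <= r <= r' -> 0 <= s <= s' ->
  norm4 p q r s <= norm4 p' q' r' s'.
Proof. intros. unfold norm4. apply sqrt_le_1_alt. nra. Qed.

Lemma abs_le_norm4 p q r s :
  Rabs p <= norm4 p q r s /\ Rabs q <= norm4 p q r s /\
  Rabs r <= norm4 p q r s /\ Rabs s <= norm4 p q r s.
Proof.
  unfold norm4. repeat split; rewrite <- sqrt_Rsqr_abs; apply sqrt_le_1_alt; unfold Rsqr; nra.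
Qed.

Lemma norm4_le_sum p q r s :
  0 <= p -> 0 <= q -> 0 <= r -> 0 <= s -> norm4 p q r s <= p + q + r + s.
Proof. intros. apply sqrt_le_of_le_pow2; nra. Qed.

Lemma norm4_triangle p q r s p' q' r' s' :
  norm4 (p + p') (q + q') (r + r') (s + s') <= norm4 p q r s + norm4 p' q' r' s'.
Proof.
  pose proof (norm4_nonneg p q r s) as Ha. pose proof (norm4_nonneg p' q' r' s') as Hb.
  pose proof (norm4_pow2 p q r s) as Ea. pose proof (norm4_pow2 p' q' r' s') as Eb.
  set (a := norm4 p q r s) in *. set (b := norm4 p' q' r' s') in *.
  apply sqrt_le_of_le_pow2; [lra|].
  (* Cauchy-Schwarz, through Lagrange's identity *)
  assert (Hcs : (p * p' + q * q' + r * r' + s * s') ^ 2 <= (a * b) ^ 2).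
  { rewrite Rpow_mult_distr, Ea, Eb.
    assert (0 <= (p * q' - q * p') ^ 2 + (p * r' - r * p') ^ 2 + (p * s' - s * p') ^ 2
                 + (q * r' - r * q') ^ 2 + (q * s' - s * q') ^ 2 + (r * s' - s * r') ^ 2)
      by (repeat apply Rplus_le_le_0_compat; apply pow2_ge_0).
    nra. }
  assert (p * p' + q * q' + r * r' + s * s' <= a * b).
  { destruct (Rle_dec (p * p' + q * q' + r * r' + s * s') 0); [nra|].
    apply Rsqr_incr_0_var; unfold Rsqr; nra. }
  nra.
Qed.

(* Submultiplicativity of the Frobenius norm, in a form that accepts the entrywise
   triangle inequalities for the product. *)
Lemma norm4_mul_le a b c d e f g h x11 x12 x21 x22 :
  0 <= a -> 0 <= b -> 0 <= c -> 0 <= d -> 0 <= e -> 0 <= f -> 0 <= g -> 0 <= h ->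
  0 <= x11 <= a * e + b * g -> 0 <= x12 <= a * f + b * h ->
  0 <= x21 <= c * e + d * g -> 0 <= x22 <= c * f + d * h ->
  norm4 x11 x12 x21 x22 <= norm4 a b c d * norm4 e f g h.
Proof.
  intros.
  unfold norm4. rewrite <- sqrt_mult by (repeat apply Rplus_le_le_0_compat; apply pow2_ge_0).
  apply sqrt_le_1_alt.
  assert (x11 ^ 2 <= (a * e + b * g) ^ 2) by (apply pow_incr; lra).
  assert (x12 ^ 2 <= (a * f + b * h) ^ 2) by (apply pow_incr; lra).
  assert (x21 ^ 2 <= (c * e + d * g) ^ 2) by (apply pow_incr; lra).
  assert (x22 ^ 2 <= (c * f + d * h) ^ 2) by (apply pow_incr; lra).
  assert (0 <= (a * g - b * e) ^ 2) by apply pow2_ge_0.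
  assert (0 <= (a * h - b * f) ^ 2) by apply pow2_ge_0.
  assert (0 <= (c * g - d * e) ^ 2) by apply pow2_ge_0.
  assert (0 <= (c * h - d * f) ^ 2) by apply pow2_ge_0.
  nra.
Qed.

Lemma Cmod_sub_le (a b : C) : Cmod (a - b)%C <= Rabs (fst a - fst b) + Rabs (snd a - snd b).
Proof.
  destruct a as [x y], b as [x' y']. unfold Cmod.
  change (fst ((x, y) - (x', y'))%C) with (x - x').
  change (snd ((x, y) - (x', y'))%C) with (y - y').
  cbn [fst snd]. pose proof (Rabs_pos (x - x')). pose proof (Rabs_pos (y - y')).
  apply sqrt_le_of_le_pow2; [lra|].
  rewrite <- (pow2_abs (x - x')), <- (pow2_abs (y - y')). nra.
Qed.

Lemma Cmod_sub_eq0 (a b : C) : Cmod (a - b)%C = 0 -> a = b.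
Proof.
  intros H. apply Cmod_eq_0 in H.
  replace a with ((a - b) + b)%C by ring. rewrite H. ring.
Qed.

Lemma M2_ext A B : ma A = ma B -> mb A = mb B -> mc A = mc B -> md A = md B -> A = B.
Proof. destruct A, B; simpl; intros; subst; reflexivity. Qed.

Definition madd (A B : M2) : M2 :=
  mkM2 (ma A + ma B)%C (mb A + mb B)%C (mc A + mc B)%C (md A + md B)%C.
Definition msub (A B : M2) : M2 :=
  mkM2 (ma A - ma B)%C (mb A - mb B)%C (mc A - mc B)%C (md A - md B)%C.
Definition mnorm (A : M2) : R :=
  norm4 (Cmod (ma A)) (Cmod (mb A)) (Cmod (mc A)) (Cmod (md A)).

Lemma mdist_msub A B : mdist A B = mnorm (msub A B).
Proof. reflexivity. Qed.

Lemma mnorm_nonneg A : 0 <= mnorm A.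
Proof. apply norm4_nonneg. Qed.

Lemma Cmod_le_mnorm A :
  Cmod (ma A) <= mnorm A /\ Cmod (mb A) <= mnorm A /\
  Cmod (mc A) <= mnorm A /\ Cmod (md A) <= mnorm A.
Proof.
  unfold mnorm. rewrite <- (Rabs_pos_eq (Cmod (ma A))) at 1 by apply Cmod_ge_0.
  rewrite <- (Rabs_pos_eq (Cmod (mb A))) at 2 by apply Cmod_ge_0.
  rewrite <- (Rabs_pos_eq (Cmod (mc A))) at 3 by apply Cmod_ge_0.
  rewrite <- (Rabs_pos_eq (Cmod (md A))) at 4 by apply Cmod_ge_0.
  apply abs_le_norm4.
Qed.

Lemma mnorm_madd A B : mnorm (madd A B) <= mnorm A + mnorm B.
Proof.
  unfold mnorm. eapply Rle_trans; [|apply norm4_triangle].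
  apply norm4_le; split; try apply Cmod_ge_0; apply Cmod_triangle.
Qed.

Lemma mnorm_mneg A : mnorm (mneg A) = mnorm A.
Proof. unfold mnorm. simpl. now rewrite !Cmod_opp. Qed.

Lemma mnorm_minv A : mnorm (minv A) = mnorm A.
Proof. unfold mnorm, norm4. simpl. rewrite !Cmod_opp. f_equal. ring. Qed.

Lemma mnorm_mmul A B : mnorm (mmul A B) <= mnorm A * mnorm B.
Proof.
  unfold mnorm. destruct A as [a b c d], B as [e f g h]; simpl.
  apply norm4_mul_le; try apply Cmod_ge_0; (split; [apply Cmod_ge_0|]);
    (eapply Rle_trans; [apply Cmod_triangle|]); rewrite !Cmod_mult; lra.
Qed.

Lemma mnorm_mid : mnorm mid <= 3 / 2.
Proof. unfold mnorm. simpl. rewrite Cmod_0, Cmod_1. apply sqrt_le_of_le_pow2; lra. Qed.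

Lemma mdist_nonneg A B : 0 <= mdist A B.
Proof. rewrite mdist_msub. apply mnorm_nonneg. Qed.

Lemma mdist_sym A B : mdist A B = mdist B A.
Proof.
  rewrite !mdist_msub, <- mnorm_mneg. f_equal. apply M2_ext; simpl; ring.
Qed.

Lemma mdist_triangle A B C : mdist A C <= mdist A B + mdist B C.
Proof.
  rewrite !mdist_msub. replace (msub A C) with (madd (msub A B) (msub B C)).
  - apply mnorm_madd.
  - apply M2_ext; simpl; ring.
Qed.

Lemma mdist_mneg A B : mdist (mneg A) (mneg B) = mdist A B.
Proof. rewrite !mdist_msub, <- mnorm_mneg. f_equal. apply M2_ext; simpl; ring. Qed.

Lemma mneg_involutive A : mneg (mneg A) = A.
Proof. apply M2_ext; simpl; ring. Qed.

Lemma mdist_mneg_r A B : mdist A (mneg B) = mdist (mneg A) B.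
Proof. now rewrite <- (mdist_mneg (mneg A)), mneg_involutive. Qed.

Lemma mdist_self A : mdist A A = 0.
Proof.
  rewrite mdist_msub. replace (msub A A) with (mkM2 0 0 0 0) by (apply M2_ext; simpl; ring).
  unfold mnorm, norm4. cbn [ma mb mc md]. rewrite Cmod_0.
  replace (0 ^ 2 + 0 ^ 2 + 0 ^ 2 + 0 ^ 2) with 0 by ring. apply sqrt_0.
Qed.

Lemma mdist_eq0 A B : mdist A B = 0 -> A = B.
Proof.
  rewrite mdist_msub. intros H. destruct (Cmod_le_mnorm (msub A B)) as (Ha & Hb & Hc & Hd).
  simpl in Ha, Hb, Hc, Hd.
  pose proof (Cmod_ge_0 (ma A - ma B)%C). pose proof (Cmod_ge_0 (mb A - mb B)%C).
  pose proof (Cmod_ge_0 (mc A - mc B)%C). pose proof (Cmod_ge_0 (md A - md B)%C).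
  apply M2_ext; apply Cmod_sub_eq0; lra.
Qed.

Lemma mnorm_le_mdist A B : mnorm A <= mnorm B + mdist A B.
Proof.
  rewrite mdist_msub. replace A with (madd B (msub A B)) at 1 by (apply M2_ext; simpl; ring).
  apply mnorm_madd.
Qed.

Lemma mdist_mmul_l G A B : mdist (mmul G A) (mmul G B) <= mnorm G * mdist A B.
Proof.
  rewrite !mdist_msub. replace (msub (mmul G A) (mmul G B)) with (mmul G (msub A B)).
  - apply mnorm_mmul.
  - apply M2_ext; simpl; ring.
Qed.

Lemma mdet_lipschitz A B :
  Cmod (mdet A - mdet B)%C <= 2 * (mnorm A + mnorm B) * mdist A B.
Proof.
  destruct (Cmod_le_mnorm A) as (A1 & A2 & A3 & A4).
  destruct (Cmod_le_mnorm B) as (B1 & B2 & B3 & B4).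
  destruct (Cmod_le_mnorm (msub A B)) as (D1 & D2 & D3 & D4). simpl in D1, D2, D3, D4.
  rewrite mdist_msub. unfold mdet.
  replace (ma A * md A - mb A * mc A - (ma B * md B - mb B * mc B))%C with
    (ma A * (md A - md B) + (ma A - ma B) * md B
     - (mb A * (mc A - mc B) + (mb A - mb B) * mc B))%C by ring.
  unfold Cminus at 1. eapply Rle_trans; [apply Cmod_triangle|]. rewrite Cmod_opp.
  eapply Rle_trans; [apply Rplus_le_compat; apply Cmod_triangle|]. rewrite !Cmod_mult.
  pose proof (Cmod_ge_0 (ma A)). pose proof (Cmod_ge_0 (mb A)).
  pose proof (Cmod_ge_0 (mc B)). pose proof (Cmod_ge_0 (md B)).
  pose proof (Cmod_ge_0 (ma A - ma B)%C). pose proof (Cmod_ge_0 (mb A - mb B)%C).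
  pose proof (Cmod_ge_0 (mc A - mc B)%C). pose proof (Cmod_ge_0 (md A - md B)%C).
  nra.
Qed.

(** * The quotient distance on PSL_2(C) *)

Lemma peq_sym A B : peq A B -> peq B A.
Proof. intros [-> | ->]; [left | right]; auto using mneg_involutive. Qed.

Lemma peq_trans A B C : peq A B -> peq B C -> peq A C.
Proof.
  intros [-> | ->] [-> | ->]; [left | right | right | left]; auto using mneg_involutive.
Qed.

Lemma pdist_le_mdist A B : pdist A B <= mdist A B.
Proof. apply Rmin_l. Qed.

Lemma pdist_le_mdist_mneg A B : pdist A B <= mdist A (mneg B).
Proof. apply Rmin_r. Qed.

Lemma pdist_cases A B : pdist A B = mdist A B \/ pdist A B = mdist A (mneg B).
Proof. unfold pdist, Rmin. destruct Rle_dec; auto. Qed.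

Lemma pdist_nonneg A B : 0 <= pdist A B.
Proof. destruct (pdist_cases A B) as [-> | ->]; apply mdist_nonneg. Qed.

Lemma pdist_mneg_r A B : pdist A (mneg B) = pdist A B.
Proof. unfold pdist. rewrite mneg_involutive. apply Rmin_comm. Qed.

Lemma pdist_sym A B : pdist A B = pdist B A.
Proof. unfold pdist. f_equal; [|rewrite mdist_mneg_r]; apply mdist_sym. Qed.

Lemma pdist_peq_l A B C : peq A B -> pdist A C = pdist B C.
Proof.
  intros [-> | ->]; [reflexivity|]. now rewrite pdist_sym, pdist_mneg_r, pdist_sym.
Qed.

Lemma pdist_peq_r A B C : peq A B -> pdist C A = pdist C B.
Proof. intros H. rewrite !(pdist_sym C). now apply pdist_peq_l. Qed.

Lemma pdist_self A : pdist A A = 0.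
Proof.
  apply Rle_antisym; [|apply pdist_nonneg]. rewrite <- (mdist_self A). apply pdist_le_mdist.
Qed.

Lemma pdist_eq0_iff A B : pdist A B = 0 <-> peq A B.
Proof.
  split.
  - destruct (pdist_cases A B) as [-> | ->]; intros H%mdist_eq0; [left | right]; exact H.
  - intros H. rewrite (pdist_peq_l A B B H). apply pdist_self.
Qed.

Lemma pdist_triangle A B C : pdist A C <= pdist A B + pdist B C.
Proof.
  destruct (pdist_cases A B) as [-> | ->]; destruct (pdist_cases B C) as [-> | ->].
  - eapply Rle_trans; [apply pdist_le_mdist | apply mdist_triangle].
  - eapply Rle_trans; [apply pdist_le_mdist_mneg | apply mdist_triangle].
  - eapply Rle_trans; [apply pdist_le_mdist_mneg|].
    eapply Rle_trans; [apply (mdist_triangle _ (mneg B))|]. rewrite mdist_mneg. lra.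
  - eapply Rle_trans; [apply pdist_le_mdist|].
    eapply Rle_trans; [apply (mdist_triangle _ (mneg B))|]. rewrite <- mdist_mneg_r. lra.
Qed.

Lemma mnorm_le_pdist A B : mnorm A <= mnorm B + pdist A B.
Proof.
  destruct (pdist_cases A B) as [-> | ->]; [apply mnorm_le_mdist|].
  rewrite <- (mnorm_mneg B). apply mnorm_le_mdist.
Qed.

Lemma pdist_mmul_l G A B : pdist (mmul G A) (mmul G B) <= mnorm G * pdist A B.
Proof.
  pose proof (mnorm_nonneg G).
  destruct (pdist_cases A B) as [-> | ->].
  - eapply Rle_trans; [apply pdist_le_mdist | apply mdist_mmul_l].
  - eapply Rle_trans; [apply pdist_le_mdist_mneg|].
    replace (mneg (mmul G B)) with (mmul G (mneg B)) by (apply M2_ext; simpl; ring).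
    apply mdist_mmul_l.
Qed.

Lemma mmul_assoc A B C : mmul A (mmul B C) = mmul (mmul A B) C.
Proof. apply M2_ext; simpl; ring. Qed.

Lemma mmul_mid_l A : mmul mid A = A.
Proof. apply M2_ext; simpl; ring. Qed.

Lemma mmul_mid_r A : mmul A mid = A.
Proof. apply M2_ext; simpl; ring. Qed.

Lemma mmul_minv_l A : SL2 A -> mmul (minv A) A = mid.
Proof. unfold SL2, mdet. intros H. apply M2_ext; simpl; try ring; rewrite <- H; ring. Qed.

Lemma mmul_minv_r A : SL2 A -> mmul A (minv A) = mid.
Proof. unfold SL2, mdet. intros H. apply M2_ext; simpl; try ring; rewrite <- H; ring. Qed.

Lemma mpow_add A a b : mpow A (a + b) = mmul (mpow A a) (mpow A b).
Proof.
  induction a as [|a IH]; simpl; [now rewrite mmul_mid_l|]. now rewrite IH, mmul_assoc.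
Qed.

Lemma mpow_succ_r A k : mpow A (S k) = mmul (mpow A k) A.
Proof. rewrite <- Nat.add_1_r, mpow_add. simpl. now rewrite mmul_mid_r. Qed.

Lemma mmul_peq_mid_r A X : peq X mid -> peq (mmul A X) A.
Proof.
  intros [-> | ->]; [left; apply mmul_mid_r | right].
  apply M2_ext; simpl; ring.
Qed.

Lemma pdist_cancel_l P X Y : SL2 P -> pdist X Y <= mnorm P * pdist (mmul P X) (mmul P Y).
Proof.
  intros HP. rewrite <- mnorm_minv.
  assert (Hc : forall Z, mmul (minv P) (mmul P Z) = Z)
    by (intros Z; now rewrite mmul_assoc, mmul_minv_l, mmul_mid_l).
  rewrite <- (Hc X) at 1. rewrite <- (Hc Y) at 1. apply pdist_mmul_l.
Qed.

Lemma mem_SL2 (G : Dspace) A : mem G A -> SL2 A.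
Proof. destruct (proj2_sig G) as [(HSL & _) _]. apply HSL. Qed.

Lemma mem_mid (G : Dspace) : mem G mid.
Proof. destruct (proj2_sig G) as [(_ & H & _) _]. exact H. Qed.

Lemma mem_mmul (G : Dspace) A B : mem G A -> mem G B -> mem G (mmul A B).
Proof. destruct (proj2_sig G) as [(_ & _ & _ & H & _) _]. apply H. Qed.

Lemma mem_minv (G : Dspace) A : mem G A -> mem G (minv A).
Proof. destruct (proj2_sig G) as [(_ & _ & _ & _ & H) _]. apply H. Qed.

Lemma mem_mpow (G : Dspace) A k : mem G A -> mem G (mpow A k).
Proof.
  intros HA. induction k as [|k IH]; simpl; [apply mem_mid | now apply mem_mmul].
Qed.

Lemma mem_discrete (G : Dspace) : is_discrete (mem G).
Proof. destruct (proj2_sig G) as [_ [H _]]. exact H. Qed.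

Lemma mem_torsion_free (G : Dspace) : is_torsion_free (mem G).
Proof. destruct (proj2_sig G) as [_ [_ H]]. exact H. Qed.

Definition near_in (D : R -> Prop) (t : R) (P : R -> Prop) : Prop :=
  exists delta, delta > 0 /\ forall u, D u -> Rabs (u - t) < delta -> P u.

Lemma near_in_mono D t (P Q : R -> Prop) :
  (forall u, D u -> P u -> Q u) -> near_in D t P -> near_in D t Q.
Proof. intros HPQ [d [Hd HP]]. exists d. split; auto. Qed.

Lemma near_in_and D t (P Q : R -> Prop) :
  near_in D t P -> near_in D t Q -> near_in D t (fun u => P u /\ Q u).
Proof.
  intros [d1 [Hd1 HP]] [d2 [Hd2 HQ]]. exists (Rmin d1 d2). split; [now apply Rmin_pos|].
  intros u Hu Hut. pose proof (Rmin_l d1 d2). pose proof (Rmin_r d1 d2).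
  split; [apply HP | apply HQ]; auto; lra.
Qed.

Lemma near_in_sub (D D' : R -> Prop) t P :
  (forall u, D' u -> D u) -> near_in D t P -> near_in D' t P.
Proof. intros HD [d [Hd HP]]. exists d. split; auto. Qed.

Lemma cv_of_lt_inv (u : nat -> R) t :
  (forall n, Rabs (u n - t) < / (INR n + 1)) -> Un_cv u t.
Proof.
  intros Hu eps Heps. destruct (INR_unbounded (/ eps)) as [N HN].
  exists N. intros n Hn. eapply Rlt_trans; [apply Hu|].
  assert (INR N <= INR n) by (apply le_INR; lia).
  pose proof (Rinv_0_lt_compat eps Heps).
  rewrite <- (Rinv_inv eps). apply Rinv_lt_contravar; nra.
Qed.

Lemma sequential_near (D P : R -> Prop) t :
  (forall u : nat -> R, (forall n, D (u n)) -> Un_cv u t -> exists n, P (u n)) ->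
  near_in D t P.
Proof.
  intros Hseq. apply NNPP. intros Hfar.
  assert (Hbad : forall n : nat, exists x, D x /\ Rabs (x - t) < / (INR n + 1) /\ ~ P x).
  { intros n. apply NNPP. intros Hno. apply Hfar. exists (/ (INR n + 1)). split.
    - apply Rinv_0_lt_compat. pose proof (pos_INR n). lra.
    - intros x Hx Hxt. apply NNPP. intros HnP. apply Hno. eauto. }
  destruct (choice _ Hbad) as [u Hu].
  destruct (Hseq u) as [n Hn].
  - intros n. apply Hu.
  - apply cv_of_lt_inv. intros n. apply Hu.
  - exact (proj2 (proj2 (Hu n)) Hn).
Qed.

Definition strict_incr (phi : nat -> nat) : Prop := forall n, (phi n < phi (S n))%nat.

Lemma strict_incr_ge phi : strict_incr phi -> forall n, (n <= phi n)%nat.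
Proof. intros H n. induction n as [|n IH]; [lia|]. specialize (H n). lia. Qed.

Lemma strict_incr_comp phi psi :
  strict_incr phi -> strict_incr psi -> strict_incr (fun n => phi (psi n)).
Proof.
  intros Hphi Hpsi n.
  assert (Hmono : forall a b, (a < b)%nat -> (phi a < phi b)%nat).
  { intros a b Hab. induction Hab as [|b Hab IH]; [apply Hphi|]. specialize (Hphi b). lia. }
  apply Hmono, Hpsi.
Qed.

Lemma ValAdh_subseq (x : nat -> R) l :
  ValAdh x l -> exists phi, strict_incr phi /\ Un_cv (fun n => x (phi n)) l.
Proof.
  intros Hl.
  assert (Hnear : forall Nk : nat * nat,
             exists p, (fst Nk <= p)%nat /\ Rabs (x p - l) < / (INR (snd Nk) + 1)).
  { intros [N k]. assert (Hpos : 0 < / (INR k + 1))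
      by (apply Rinv_0_lt_compat; pose proof (pos_INR k); lra).
    apply (Hl (disc l (mkposreal _ Hpos)) N). exists (mkposreal _ Hpos). now intros y. }
  destruct (choice _ Hnear) as [g Hg].
  set (phi := fix phi k := match k with O => g (O, O) | S k => g (S (phi k), S k) end).
  exists phi. split.
  - intros n. exact (proj1 (Hg (S (phi n), S n))).
  - apply cv_of_lt_inv. intros [|k].
    + exact (proj2 (Hg (O, O))).
    + exact (proj2 (Hg (S (phi k), S k))).
Qed.

Lemma bounded_subseq_cv (x : nat -> R) B :
  (forall n, Rabs (x n) <= B) -> exists phi l, strict_incr phi /\ Un_cv (fun n => x (phi n)) l.
Proof.
  intros HB.
  destruct (Bolzano_Weierstrass x (fun c => - B <= c <= B) (compact_P3 (- B) B)) as [l Hl].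
  - intros n. now apply Rabs_le_between.
  - destruct (ValAdh_subseq x l Hl) as [phi Hphi]. now exists phi, l.
Qed.

Lemma common_subseq {T : Type} (coord : T -> nat -> R) (X : nat -> T) B k :
  (forall n i, Rabs (coord (X n) i) <= B) ->
  exists phi L, strict_incr phi /\
    forall eps, eps > 0 -> exists N, forall n i, (n >= N)%nat -> (i < k)%nat ->
      Rabs (coord (X (phi n)) i - L i) < eps.
Proof.
  intros HB. induction k as [|k IH].
  - exists (fun n => n), (fun _ => 0). split; [intros n; lia|].
    intros eps _. exists O. intros n i _ Hi. lia.
  - destruct IH as [phi [L [Hphi HL]]].
    destruct (bounded_subseq_cv (fun n => coord (X (phi n)) k) B) as [psi [l [Hpsi Hl]]];
      [intros n; apply HB|].
    exists (fun n => phi (psi n)), (fun i => if Nat.eqb i k then l else L i).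
    split; [now apply strict_incr_comp|].
    intros eps Heps. destruct (HL eps Heps) as [N1 HN1]. destruct (Hl eps Heps) as [N2 HN2].
    exists (max N1 N2). intros n i Hn Hi.
    destruct (Nat.eqb_spec i k) as [-> | Hik].
    + apply HN2. lia.
    + pose proof (strict_incr_ge psi Hpsi n). apply HN1; lia.
Qed.

Definition mcoord (A : M2) (i : nat) : R :=
  match i with
  | 0 => fst (ma A) | 1 => snd (ma A) | 2 => fst (mb A) | 3 => snd (mb A)
  | 4 => fst (mc A) | 5 => snd (mc A) | 6 => fst (md A) | _ => snd (md A)
  end.

Lemma Rabs_mcoord_le A i : Rabs (mcoord A i) <= mnorm A.
Proof.
  destruct (Cmod_le_mnorm A) as (Ha & Hb & Hc & Hd).
  pose proof (Rmax_Cmod (ma A)). pose proof (Rmax_Cmod (mb A)).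
  pose proof (Rmax_Cmod (mc A)). pose proof (Rmax_Cmod (md A)).
  repeat match goal with H : Rmax _ _ <= _ |- _ =>
    pose proof (Rle_trans _ _ _ (Rmax_l _ _) H);
    pose proof (Rle_trans _ _ _ (Rmax_r _ _) H); clear H
  end.
  do 7 (destruct i as [|i]; [simpl; lra|]). simpl. lra.
Qed.

Lemma mdist_le_mcoord A B e :
  (forall i, (i < 8)%nat -> Rabs (mcoord A i - mcoord B i) <= e) -> mdist A B <= 8 * e.
Proof.
  intros H. unfold mdist. eapply Rle_trans; [apply norm4_le_sum; apply Cmod_ge_0|].
  pose proof (Cmod_sub_le (ma A) (ma B)) as Ha. pose proof (Cmod_sub_le (mb A) (mb B)) as Hb.
  pose proof (Cmod_sub_le (mc A) (mc B)) as Hc. pose proof (Cmod_sub_le (md A) (md B)) as Hd.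
  pose proof (H 0%nat ltac:(lia)) as H0. pose proof (H 1%nat ltac:(lia)) as H1.
  pose proof (H 2%nat ltac:(lia)) as H2. pose proof (H 3%nat ltac:(lia)) as H3.
  pose proof (H 4%nat ltac:(lia)) as H4. pose proof (H 5%nat ltac:(lia)) as H5.
  pose proof (H 6%nat ltac:(lia)) as H6. pose proof (H 7%nat ltac:(lia)) as H7.
  simpl in H0, H1, H2, H3, H4, H5, H6, H7. lra.
Qed.

Definition cluster_point (X : nat -> M2) (A : M2) : Prop :=
  forall eps N, eps > 0 -> exists n, (n >= N)%nat /\ mdist (X n) A < eps.

Lemma bounded_seq_cluster (X : nat -> M2) B :
  (forall n, mnorm (X n) <= B) -> exists A, cluster_point X A.
Proof.
  intros HB.
  destruct (common_subseq mcoord X B 8) as [phi [L [Hphi HL]]].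
  { intros n i. eapply Rle_trans; [apply Rabs_mcoord_le | apply HB]. }
  exists (mkM2 (L 0, L 1) (L 2, L 3) (L 4, L 5) (L 6, L 7))%nat.
  intros eps N Heps. destruct (HL (eps / 16)) as [N0 HN0]; [lra|].
  set (m := max N N0). exists (phi m). split; [pose proof (strict_incr_ge phi Hphi m); lia|].
  apply Rle_lt_trans with (8 * (eps / 16)); [|lra].
  apply mdist_le_mcoord. intros i Hi.
  do 8 (destruct i as [|i]; [apply Rlt_le, HN0; lia|]). lia.
Qed.

Lemma cluster_SL2 X A B :
  (forall n, SL2 (X n)) -> (forall n, mnorm (X n) <= B) -> cluster_point X A -> SL2 A.
Proof.
  intros HSL HB HA. unfold SL2. apply Cmod_sub_eq0.
  set (K := 2 * (mnorm A + Rabs B) + 1).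
  assert (HK : 0 < K) by (unfold K; pose proof (mnorm_nonneg A); pose proof (Rabs_pos B); lra).
  assert (Hsmall : forall e, e > 0 -> Cmod (mdet A - 1)%C < e).
  { intros e He. destruct (HA (e / K) O) as [n [_ Hn]]; [now apply Rdiv_lt_0_compat|].
    pose proof (mdet_lipschitz A (X n)) as Hl. rewrite (HSL n), mdist_sym in Hl.
    assert (mnorm (X n) <= Rabs B) by (eapply Rle_trans; [apply HB | apply Rle_abs]).
    assert (mdist (X n) A * K < e)
      by (apply (Rmult_lt_compat_r K) in Hn; [|exact HK]; now field_simplify in Hn; [|lra]).
    pose proof (mdist_nonneg (X n) A). pose proof (mnorm_nonneg A).
    unfold K in *. nra. }
  destruct (Rle_lt_or_eq_dec 0 _ (Cmod_ge_0 (mdet A - 1)%C)) as [Hpos|]; [|auto].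
  specialize (Hsmall _ Hpos). lra.
Qed.

Lemma chabauty_limit_mem Gam t u h B :
  chabauty_path Gam -> in01 t -> (forall n, in01 (u n)) -> Un_cv u t ->
  (forall n, mem (Gam (u n)) (h n)) -> (forall n, mnorm (h n) <= B) ->
  exists A, mem (Gam t) A /\ cluster_point h A.
Proof.
  intros HG Ht Hu Hcv Hh HB.
  destruct (bounded_seq_cluster h B HB) as [A HA]. exists A. split; [|exact HA].
  apply (proj1 (HG t u Ht Hu Hcv) h Hh A). split.
  - apply (cluster_SL2 h A B); auto. intros n. exact (mem_SL2 _ _ (Hh n)).
  - intros eps N Heps. destruct (HA eps N Heps) as [n [Hn Hd]]. exists n.
    split; [exact Hn|]. eapply Rle_lt_trans; [apply pdist_le_mdist | exact Hd].
Qed.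

Lemma chabauty_approx Gam t u A eps :
  chabauty_path Gam -> in01 t -> (forall n, in01 (u n)) -> Un_cv u t ->
  mem (Gam t) A -> eps > 0 -> exists n p, mem (Gam (u n)) p /\ pdist p A < eps.
Proof.
  intros HG Ht Hu Hcv HA Heps.
  destruct (proj2 (HG t u Ht Hu Hcv) A HA) as [p [Hp Hcvp]].
  destruct (Hcvp eps Heps) as [N HN]. exists N, (p N). split; [apply Hp | apply HN; lia].
Qed.

(** * Uniform discreteness *)

Lemma peq_mid_of_bounded_powers (G : Dspace) g B :
  mem G g -> (forall k, mnorm (mpow g k) <= B) -> peq g mid.
Proof.
  intros Hg HB.
  destruct (mem_discrete G mid (mem_mid G)) as [d [Hd Hdisc]].
  assert (HB0 : 0 <= B) by (eapply Rle_trans; [apply mnorm_nonneg | apply (HB O)]).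
  destruct (bounded_seq_cluster (mpow g) B HB) as [A HA].
  set (e := d / (2 * (B + 1))).
  assert (He : e > 0) by (unfold e; apply Rdiv_lt_0_compat; lra).
  assert (Hed : 2 * e * (B + 1) = d) by (unfold e; field; lra).
  destruct (HA e O He) as [a [_ Ha]].
  destruct (HA e (S a) He) as [b [Hab Hb]].
  (* two nearby powers g^a, g^b give the power g^(b-a) close to the identity *)
  assert (Hgb : mpow g b = mmul (mpow g a) (mpow g (b - a))) by (rewrite <- mpow_add; f_equal; lia).
  assert (Hclose : pdist mid (mpow g (b - a)) < d).
  { pose proof (mem_SL2 _ _ (mem_mpow G g a Hg)) as Hga.
    pose proof (pdist_cancel_l (mpow g a) (mpow g (b - a)) mid Hga) as Hc.
    rewrite <- Hgb, mmul_mid_r in Hc.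
    assert (Hba : pdist (mpow g b) (mpow g a) <= 2 * e).
    { eapply Rle_trans; [apply pdist_le_mdist|].
      pose proof (mdist_triangle (mpow g b) A (mpow g a)). rewrite (mdist_sym A) in H. lra. }
    assert (mnorm (mpow g a) * pdist (mpow g b) (mpow g a) <= B * (2 * e))
      by (apply Rmult_le_compat; auto using mnorm_nonneg, pdist_nonneg).
    rewrite pdist_sym. nra. }
  apply (mem_torsion_free G g (b - a)%nat Hg); [lia|].
  apply peq_sym, Hdisc; [apply mem_mpow, Hg | exact Hclose].
Qed.

Lemma pdist_mpow_succ g k : pdist (mpow g (S k)) (mpow g k) <= mnorm (mpow g k) * pdist g mid.
Proof.
  rewrite mpow_succ_r. rewrite <- (mmul_mid_r (mpow g k)) at 2. apply pdist_mmul_l.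
Qed.

(* Consecutive powers are at most [eta / 4] apart while they stay within [eta / 2] of the
   identity, so they cannot jump over the window [eta / 2, eta). *)
Lemma power_escape (G : Dspace) g eta :
  0 < eta <= 1 / 2 -> mem G g -> ~ peq g mid -> pdist g mid < eta / 8 ->
  exists k, eta / 2 <= pdist (mpow g k) mid < eta.
Proof.
  intros Heta Hg Hng Hsmall.
  assert (Hstep : forall k, pdist (mpow g k) mid < eta / 2 -> pdist (mpow g (S k)) mid < eta).
  { intros k Hk.
    pose proof (pdist_triangle (mpow g (S k)) (mpow g k) mid).
    pose proof (pdist_mpow_succ g k).
    pose proof (mnorm_le_pdist (mpow g k) mid). pose proof mnorm_mid.
    assert (mnorm (mpow g k) * pdist g mid <= 2 * (eta / 8))
      by (apply Rmult_le_compat; auto using mnorm_nonneg, pdist_nonneg; lra).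
    lra. }
  apply NNPP. intros Hnone.
  assert (Hall : forall k, pdist (mpow g k) mid < eta / 2).
  { induction k as [|k IH]; [simpl; rewrite pdist_self; lra|].
    destruct (Rlt_le_dec (pdist (mpow g (S k)) mid) (eta / 2)) as [H|H]; [exact H|].
    exfalso. apply Hnone. exists (S k). split; auto. }
  apply Hng, (peq_mid_of_bounded_powers G g 2 Hg). intros k.
  pose proof (mnorm_le_pdist (mpow g k) mid). pose proof mnorm_mid. specialize (Hall k). lra.
Qed.

Definition no_small_elements (G : Dspace) (eps : R) : Prop :=
  forall g, mem G g -> pdist g mid < eps -> peq g mid.

Lemma uniformly_discrete_near Gam t :
  chabauty_path Gam -> in01 t ->
  exists eps, eps > 0 /\ near_in in01 t (fun u => no_small_elements (Gam u) eps).
Proof.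
  intros HG Ht.
  destruct (mem_discrete (Gam t) mid (mem_mid _)) as [e0 [He0 Hdisc]].
  set (eta := Rmin (e0 / 2) (1 / 2)).
  assert (Heta : 0 < eta <= 1 / 2) by (split; [apply Rmin_pos; lra | apply Rmin_r]).
  assert (Heta0 : eta <= e0 / 2) by apply Rmin_l.
  exists (eta / 8). split; [lra|].
  apply sequential_near. intros u Hu Hcv. apply NNPP. intros Hnone.
  assert (Hesc : forall n, exists h, mem (Gam (u n)) h /\ eta / 2 <= pdist h mid < eta).
  { intros n. apply NNPP. intros Hno. apply Hnone. exists n.
    intros g Hg Hgs. apply NNPP. intros Hng.
    destruct (power_escape _ g eta Heta Hg Hng Hgs) as [k Hk].
    apply Hno. exists (mpow g k). split; [apply mem_mpow, Hg | exact Hk]. }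
  destruct (choice _ Hesc) as [h Hh].
  destruct (chabauty_limit_mem Gam t u h 2 HG Ht Hu Hcv) as [A [HA Hcl]].
  - intros n. apply Hh.
  - intros n. pose proof (mnorm_le_pdist (h n) mid). pose proof mnorm_mid.
    destruct (Hh n) as [_ Hn]. lra.
  - (* the limit [A] is a nontrivial element of [Gam t] too close to the identity *)
    destruct (Hcl (eta / 4) O) as [n [_ Hn]]; [lra|].
    destruct (Hh n) as [_ Hhn].
    pose proof (pdist_le_mdist (h n) A).
    pose proof (pdist_triangle mid (h n) A). rewrite (pdist_sym mid (h n)) in H0.
    assert (HAmid : peq mid A) by (apply Hdisc; [exact HA | lra]).
    rewrite (pdist_peq_r _ _ _ (peq_sym _ _ HAmid)) in H. lra.
Qed.

Lemma interval_locally_constant_r (I Z : R -> Prop) s t :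
  is_interval I -> (forall x, I x -> near_in I x (fun u => Z u <-> Z x)) ->
  I s -> I t -> s <= t -> Z s -> Z t.
Proof.
  intros HI Hloc Hs Ht Hst HZs.
  set (E := fun x => s <= x <= t /\ forall y, s <= y <= x -> Z y).
  assert (HEs : E s) by (split; [lra | intros y Hy; replace y with s by lra; exact HZs]).
  destruct (completeness E) as [m [Hub Hlub]].
  { exists t. intros x [Hx _]. lra. }
  { exists s. exact HEs. }
  assert (Hsm : s <= m) by (apply Hub, HEs).
  assert (Hmt : m <= t) by (apply Hlub; intros x [Hx _]; lra).
  destruct (Hloc m (HI s m t Hs Ht (conj Hsm Hmt))) as [d [Hd Hnear]].
  assert (Hx : exists x, E x /\ m - d < x).
  { apply NNPP. intros Hno. enough (m <= m - d) by lra.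
    apply Hlub. intros x Ex. apply Rnot_lt_le. intros Hlt. apply Hno. eauto. }
  destruct Hx as [x [Ex Hxd]].
  assert (Hxm : x <= m) by (apply Hub, Ex).
  destruct Ex as [Hx HZx].
  assert (HZm : Z m).
  { apply (Hnear x); [apply (HI s x t); auto; lra | apply Rabs_def1; lra | apply HZx; lra]. }
  (* past the supremum [Z] still holds, up to [m + d / 2] *)
  set (x' := Rmin (m + d / 2) t).
  assert (HEx' : E x').
  { split; [unfold x', Rmin; destruct Rle_dec; lra|].
    intros y Hy. unfold x' in Hy. destruct (Rle_dec y x) as [Hyx|Hyx]; [apply HZx; lra|].
    assert (y <= m + d / 2) by (pose proof (Rmin_l (m + d / 2) t); lra).
    assert (y <= t) by (pose proof (Rmin_r (m + d / 2) t); lra).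
    apply (Hnear y); [apply (HI s y t); auto; lra | apply Rabs_def1; lra | exact HZm]. }
  assert (x' <= m) by (apply Hub, HEx').
  unfold x', Rmin in *. destruct Rle_dec; [lra|].
  apply (proj2 HEx'). lra.
Qed.

Lemma interval_locally_constant (I Z : R -> Prop) s t :
  is_interval I -> (forall x, I x -> near_in I x (fun u => Z u <-> Z x)) ->
  I s -> I t -> Z s -> Z t.
Proof.
  intros HI Hloc Hs Ht HZs.
  destruct (Rle_lt_dec s t) as [Hst|Hts].
  { exact (interval_locally_constant_r I Z s t HI Hloc Hs Ht Hst HZs). }
  apply NNPP. intros HnZt.
  refine (interval_locally_constant_r I (fun x => ~ Z x) t s HI _ Ht Hs (Rlt_le _ _ Hts) HnZt HZs).
  intros x Hx. apply (near_in_mono I x (fun u => Z u <-> Z x)); [tauto | apply Hloc, Hx].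
Qed.

(** * Gamma-paths *)

Lemma peq_of_pdist_small (G : Dspace) eps p p' :
  no_small_elements G eps -> mem G p -> mem G p' -> mnorm p * pdist p p' < eps -> peq p p'.
Proof.
  intros Hsmall Hp Hp' Hlt.
  set (X := mmul (minv p) p').
  assert (HpX : mmul p X = p')
    by (unfold X; rewrite mmul_assoc, mmul_minv_r, mmul_mid_l; [|apply (mem_SL2 G)]; auto).
  assert (HX : peq X mid).
  { apply Hsmall; [apply mem_mmul; [apply mem_minv|]; assumption|].
    pose proof (pdist_cancel_l p X mid (mem_SL2 G p Hp)) as Hc.
    rewrite HpX, mmul_mid_r, (pdist_sym p' p) in Hc. lra. }
  rewrite <- HpX. apply peq_sym, mmul_peq_mid_r, HX.
Qed.

Lemma peq_of_near (G : Dspace) eps A r p p' :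
  no_small_elements G eps -> r <= 1 / 4 -> 4 * r * (mnorm A + 1) < eps ->
  mem G p -> mem G p' -> pdist p A < 2 * r -> pdist p' A < 2 * r -> peq p p'.
Proof.
  intros Hsmall Hr Hre Hp Hp' HpA Hp'A. apply (peq_of_pdist_small G eps); auto.
  pose proof (mnorm_le_pdist p A).
  pose proof (pdist_triangle p A p'). rewrite (pdist_sym A p') in H0.
  assert (mnorm p * pdist p p' <= (mnorm A + 1) * (4 * r))
    by (apply Rmult_le_compat; auto using mnorm_nonneg, pdist_nonneg; lra).
  lra.
Qed.

Definition pcontinuous_on (I : R -> Prop) (j : R -> M2) : Prop :=
  forall t, I t -> forall eps, eps > 0 -> near_in I t (fun u => pdist (j u) (j t) < eps).

Lemma near_selection_continuous Gam I psi r j :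
  chabauty_path Gam -> sub01 I -> r > 0 ->
  (forall u, I u -> mem (Gam u) (j u) /\ pdist (j u) psi < r) ->
  (forall u, I u -> forall p p', mem (Gam u) p -> mem (Gam u) p' ->
     pdist p psi < 2 * r -> pdist p' psi < 2 * r -> peq p p') ->
  pcontinuous_on I j.
Proof.
  intros HG Hsub Hr Hj Hunique t Ht eps Heps. apply sequential_near. intros u Hu Hcv.
  destruct (Hj t Ht) as [Hjt Hjtpsi].
  destruct (chabauty_approx Gam t u (j t) (Rmin eps r) HG (Hsub t Ht)
              (fun n => Hsub _ (Hu n)) Hcv Hjt)
    as [n [p [Hp Hpj]]]; [now apply Rmin_pos|].
  exists n. pose proof (Rmin_l eps r). pose proof (Rmin_r eps r).
  destruct (Hj (u n) (Hu n)) as [Hjn Hjnpsi].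
  assert (Hpeq : peq (j (u n)) p).
  { apply (Hunique (u n) (Hu n)); auto; [lra|].
    pose proof (pdist_triangle p (j t) psi). lra. }
  rewrite (pdist_peq_l _ _ _ Hpeq). lra.
Qed.

Lemma in01_ball_interval s d : is_interval (fun u => in01 u /\ Rabs (u - s) < d).
Proof.
  intros x y z [Hx Hxs] [Hz Hzs] Hy. unfold in01 in *.
  apply Rabs_def2 in Hxs, Hzs. split; [lra | apply Rabs_def1; lra].
Qed.

Lemma in01_ball_open s d : open_in01 (fun u => in01 u /\ Rabs (u - s) < d).
Proof.
  intros x [Hx Hxs]. exists (d - Rabs (x - s)). split; [lra|].
  intros u Hu Hux. split; [exact Hu|].
  pose proof (Rabs_triang (u - x) (x - s)). replace (u - x + (x - s)) with (u - s) in H by ring.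
  lra.
Qed.

Lemma Gamma_path_exists Gam s psi :
  chabauty_path Gam -> in01 s -> mem (Gam s) psi ->
  exists I j, open_in01 I /\ Gamma_path Gam s psi I j.
Proof.
  intros HG Hs Hpsi.
  destruct (uniformly_discrete_near Gam s HG Hs) as [e0 [He0 Hsmall]].
  set (r := Rmin (1 / 4) (e0 / (8 * (mnorm psi + 1)))).
  assert (Hr : 0 < r /\ r <= 1 / 4 /\ 4 * r * (mnorm psi + 1) < e0).
  { pose proof (mnorm_nonneg psi).
    assert (Hr2 : r <= e0 / (8 * (mnorm psi + 1))) by apply Rmin_r.
    apply (Rmult_le_compat_r (8 * (mnorm psi + 1))) in Hr2; [|lra].
    replace (e0 / (8 * (mnorm psi + 1)) * (8 * (mnorm psi + 1))) with e0 in Hr2 by (field; lra).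
    repeat split; [apply Rmin_pos; [lra | apply Rdiv_lt_0_compat; lra] | apply Rmin_l | lra]. }
  destruct Hr as (Hr0 & Hr1 & Hre).
  assert (Hnear : near_in in01 s (fun u => no_small_elements (Gam u) e0 /\
                                           exists p, mem (Gam u) p /\ pdist p psi < r)).
  { apply near_in_and; [exact Hsmall|]. apply sequential_near. intros u Hu Hcv.
    exact (chabauty_approx Gam s u psi r HG Hs Hu Hcv Hpsi Hr0). }
  destruct Hnear as [d [Hd Hnear]].
  set (I := fun u => in01 u /\ Rabs (u - s) < d).
  set (j := fun u => epsilon (inhabits mid) (fun p => mem (Gam u) p /\ pdist p psi < r)).
  assert (Hj : forall u, I u -> mem (Gam u) (j u) /\ pdist (j u) psi < r)
    by (intros u [Hu Hus]; apply epsilon_spec, (Hnear u Hu Hus)).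
  assert (Hunique : forall u, I u -> forall p p', mem (Gam u) p -> mem (Gam u) p' ->
                      pdist p psi < 2 * r -> pdist p' psi < 2 * r -> peq p p')
    by (intros u [Hu Hus] p p'; apply (peq_of_near _ e0 psi r); auto; apply (Hnear u Hu Hus)).
  assert (HIs : I s) by (split; [exact Hs | rewrite Rminus_diag, Rabs_R0; exact Hd]).
  exists I, j. split; [apply in01_ball_open|].
  split; [apply in01_ball_interval|].
  split; [intros u Hu; apply Hu|].
  split; [exact HIs|].
  split.
  { exact (near_selection_continuous Gam I psi r j HG (fun u Hu => proj1 Hu) Hr0 Hj Hunique). }
  split; [intros u Hu; apply Hj, Hu|].
  destruct (Hj s HIs) as [Hjs Hjspsi].
  apply (Hunique s HIs); [exact Hjs | exact Hpsi | lra | rewrite pdist_self; lra].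
Qed.

Lemma peq_near_of_peq Gam I j j' x :
  chabauty_path Gam -> sub01 I -> pcontinuous_on I j -> pcontinuous_on I j' ->
  (forall t, I t -> mem (Gam t) (j t)) -> (forall t, I t -> mem (Gam t) (j' t)) ->
  I x -> peq (j x) (j' x) -> near_in I x (fun u => peq (j u) (j' u)).
Proof.
  intros HG Hsub Hc Hc' Hm Hm' Hx Hxx.
  destruct (uniformly_discrete_near Gam x HG (Hsub x Hx)) as [eK [HeK Hsmall]].
  set (e := Rmin (1 / 2) (eK / (4 * (mnorm (j x) + 1)))).
  assert (He : 0 < e /\ e <= 1 / 2 /\ 2 * e * (mnorm (j x) + 1) < eK).
  { pose proof (mnorm_nonneg (j x)).
    assert (He2 : e <= eK / (4 * (mnorm (j x) + 1))) by apply Rmin_r.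
    apply (Rmult_le_compat_r (4 * (mnorm (j x) + 1))) in He2; [|lra].
    replace (eK / (4 * (mnorm (j x) + 1)) * (4 * (mnorm (j x) + 1))) with eK in He2 by (field; lra).
    repeat split; [apply Rmin_pos; [lra | apply Rdiv_lt_0_compat; lra] | apply Rmin_l | lra]. }
  destruct He as (He0 & He1 & HeK').
  generalize (near_in_and _ _ _ _ (near_in_sub in01 I x _ Hsub Hsmall)
               (near_in_and _ _ _ _ (Hc x Hx e He0) (Hc' x Hx e He0))).
  apply near_in_mono. intros u Hu (Hsm & Hju & Hj'u).
  apply (peq_of_near _ eK (j x) (e / 2) _ _ Hsm); auto; try lra.
  rewrite (pdist_peq_r _ _ _ Hxx). lra.
Qed.

Lemma not_peq_near I j j' x :
  pcontinuous_on I j -> pcontinuous_on I j' -> I x -> ~ peq (j x) (j' x) ->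
  near_in I x (fun u => ~ peq (j u) (j' u)).
Proof.
  intros Hc Hc' Hx Hne.
  assert (Hpos : 0 < pdist (j x) (j' x)).
  { destruct (Rle_lt_or_eq_dec 0 _ (pdist_nonneg (j x) (j' x))) as [H|H]; [exact H|].
    exfalso. apply Hne, pdist_eq0_iff. auto. }
  set (e := pdist (j x) (j' x) / 3).
  assert (He : e > 0) by (unfold e; lra).
  generalize (near_in_and _ _ _ _ (Hc x Hx e He) (Hc' x Hx e He)).
  apply near_in_mono. intros u Hu [H1 H2] Hequ%pdist_eq0_iff.
  pose proof (pdist_triangle (j x) (j u) (j' x)).
  pose proof (pdist_triangle (j u) (j' u) (j' x)).
  rewrite (pdist_sym (j x) (j u)) in H. unfold e in *. lra.
Qed.

Lemma Gamma_paths_agree Gam s psi I j j' :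
  chabauty_path Gam -> Gamma_path Gam s psi I j -> Gamma_path Gam s psi I j' ->
  forall t, I t -> peq (j t) (j' t).
Proof.
  intros HG (HI & Hsub & Hs & Hc & Hm & Hjs) (_ & _ & _ & Hc' & Hm' & Hjs') t Ht.
  apply (interval_locally_constant I (fun x => peq (j x) (j' x)) s t HI); auto.
  - intros x Hx. destruct (classic (peq (j x) (j' x))) as [Hxx|Hxx].
    + refine (near_in_mono _ _ _ _ _ (peq_near_of_peq Gam I j j' x HG Hsub Hc Hc' Hm Hm' Hx Hxx)).
      intros u _ Hu. tauto.
    + refine (near_in_mono _ _ _ _ _ (not_peq_near I j j' x Hc Hc' Hx Hxx)).
      intros u _ Hu. tauto.
  - exact (peq_trans _ _ _ Hjs (peq_sym _ _ Hjs')).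
Qed.

Theorem mainTheorem10 :
  forall Gam : R -> Dspace, chabauty_path Gam ->
  forall (s : R) (psi : M2), in01 s -> mem (Gam s) psi ->
    (exists (I : R -> Prop) (j : R -> M2),
        open_in01 I /\ Gamma_path Gam s psi I j) /\
    (forall (I : R -> Prop) (j : R -> M2), Gamma_path Gam s psi I j ->
       forall j' : R -> M2, Gamma_path Gam s psi I j' ->
       forall t, I t -> peq (j t) (j' t)).
Proof.
  intros Gam HG s psi Hs Hpsi. split.
  - exact (Gamma_path_exists Gam s psi HG Hs Hpsi).
  - intros I j Hj j' Hj'. exact (Gamma_paths_agree Gam s psi I j j' HG Hj Hj').
Qed.
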